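(* Let $H$ be a finite abelian group and $k$ a positive integer. Suppose that for infinitely many primes $p$, every non-zero sum subset of size $k$ of $(\mathbb{Z}_p \times H) \setminus \{0_{\mathbb{Z}_p\times H}\}$ is sequenceable. Then for every torsion-free abelian group $G$, every non-zero sum subset of size $k$ of $(G \times H) \setminus \{0_{G\times H}\}$ is sequenceable.
   Context: For a finite subset $S$ of an abelian group with $|S| = k$, an ordering $(x_1,\dots,x_k)$ of $S$ has partial sums $(y_0,\dots,y_k)$ with $y_0 = 0$, $y_i = x_1+\cdots+x_i$. It is a sequencing if the $y_i$ are pairwise distinct, and a rotational sequencing if they are pairwise distinct except that $y_k = y_0 = 0$; $S$ is sequenceable if it has one or the other. $S$ is non-zero sum if the sum of its elements is nonzero. *)

From HB Require Import structures.
From mathcomp Require Import all_boot all_order all_algebra.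
Set Implicit Arguments. Unset Strict Implicit. Unset Printing Implicit Defensive.
Import GRing.Theory.
Local Open Scope ring_scope.

Definition psums (G : zmodType) (t : seq G) : seq G :=
  [seq \sum_(x <- take i t) x | i <- iota 0 (size t).+1].

Definition is_sequencing (G : zmodType) (t : seq G) : bool :=
  uniq (psums t).

Definition is_rot_sequencing (G : zmodType) (t : seq G) : bool :=
  uniq (take (size t) (psums t)) && (last 0 (psums t) == 0).

(* a finite subset S (given as a duplicate-free list) is sequenceable if some
   ordering of S is a sequencing or a rotational sequencing *)
Definition sequenceable (G : zmodType) (s : seq G) : Prop :=
  exists t : seq G, perm_eq s t /\ (is_sequencing t \/ is_rot_sequencing t).

Definition nonzero_sum (G : zmodType) (s : seq G) : bool :=
  \sum_(x <- s) x != 0.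

Definition torsion_free (G : zmodType) : Prop :=
  forall (x : G) (n : nat), x *+ n.+1 = 0 -> x = 0.

(* Being sequenceable, duplicate-free, zero-free and of nonzero sum are
   properties of a family (x_i) that only depend on its coincidences, the
   pairs of index sets I, J with sum_I x = sum_J x.  For the first
   coordinates g_i in a torsion-free group, the coincidence vectors 1_I - 1_J
   span a rational subspace V containing no other vector 1_I - 1_J: an integer
   vector of V has a positive multiple that is an integer combination of
   coincidences, and torsion-freeness removes the multiple.  A rational
   functional vanishing on V but on none of the finitely many vectors
   1_I - 1_J outside V, scaled to integer values b_i, gives integers with the
   same coincidences as the g_i, and so do their residues modulo any prime
   p > 2 sum |b_i|.  Hence (g_i, h_i) and (b_i mod p, h_i) have the same
   coincidences, and sequenceability transfers from Z_p x H to G x H. *)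

From HB Require Import structures.
From mathcomp Require Import all_boot all_order all_algebra all_fingroup.
Set Implicit Arguments.
Unset Strict Implicit.
Unset Printing Implicit Defensive.

Import Order.TTheory GRing.Theory Num.Theory.
Local Open Scope ring_scope.

Lemma eq_uniq_map (T A B : eqType) (f : T -> A) (g : T -> B) (s : seq T) :
  {in s &, forall a b, (f a == f b) = (g a == g b)} -> uniq (map f s) = uniq (map g s).
Proof.
elim: s => //= a s IHs fg; rewrite IHs => [|u v su sv]; last first.
  by rewrite fg ?inE ?su ?sv ?orbT.
congr (~~ _ && _); rewrite -!has_pred1 !has_map; apply: eq_in_has => u su /=.
by rewrite fg ?inE ?eqxx ?su ?orbT.
Qed.

Section SubsetSums.

Variable k : nat.
Implicit Types (A B C : zmodType) (I J : {set 'I_k}).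

Definition subset_sums_equiv A B (x : 'I_k -> A) (y : 'I_k -> B) :=
  forall I J, (\sum_(i in I) x i == \sum_(i in J) x i) =
              (\sum_(i in I) y i == \sum_(i in J) y i).

Lemma subset_sums_equiv_pair A B C (x : 'I_k -> (A * C)%type) (y : 'I_k -> (B * C)%type) :
  subset_sums_equiv (fun i => (x i).1) (fun i => (y i).1) ->
  (forall i, (x i).2 = (y i).2) ->
  subset_sums_equiv x y.
Proof.
move=> xy1 xy2 I J.
have sum_pair (D E : zmodType) (z : 'I_k -> (D * E)%type) (S : {set 'I_k}) :
    \sum_(i in S) z i = (\sum_(i in S) (z i).1, \sum_(i in S) (z i).2).
  by elim/big_rec3: _ => // i s a b _ ->; case: (z i).
by rewrite !sum_pair !xpair_eqE xy1; congr (_ && (_ == _)); apply: eq_bigr.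
Qed.

Lemma psums_map_uniq A (x : 'I_k -> A) (r : seq 'I_k) : uniq r ->
  psums (map x r) = [seq \sum_(i in [set j in take n r]) x i | n <- iota 0 (size r).+1].
Proof.
move=> r_uniq; rewrite /psums size_map; apply: eq_map => n.
rewrite -map_take big_map big_uniq ?take_uniq //.
by apply: eq_bigl => i; rewrite inE.
Qed.

Section Transfer.

Variables (A B : zmodType) (x : 'I_k -> A) (y : 'I_k -> B).
Hypothesis xy : subset_sums_equiv x y.

Lemma sum_eq0_equiv (S : {set 'I_k}) : (\sum_(i in S) x i == 0) = (\sum_(i in S) y i == 0).
Proof. by have := xy S set0; rewrite !big_set0. Qed.

Lemma is_sequencing_equiv r : uniq r -> is_sequencing (map x r) = is_sequencing (map y r).
Proof. by move=> r_uniq; rewrite /is_sequencing !psums_map_uniq //; apply: eq_uniq_map. Qed.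

Lemma is_rot_sequencing_equiv r :
  uniq r -> is_rot_sequencing (map x r) = is_rot_sequencing (map y r).
Proof.
move=> r_uniq; rewrite /is_rot_sequencing !psums_map_uniq // !size_map -!map_take.
rewrite (@eq_uniq_map _ _ _ _ (fun n => \sum_(i in [set j in take n r]) y i)) //=.
by rewrite !(last_map (fun n => \sum_(i in [set j in take n r]) _ i)) sum_eq0_equiv.
Qed.

Lemma sequenceable_equiv : sequenceable (codom y) -> sequenceable (codom x).
Proof.
have codomE_tuple (C : zmodType) (z : 'I_k -> C) : codom z = [tuple z i | i < k].
  by rewrite codomE.
case=> t [yt t_seq]; have /tuple_permP [p t_E] : perm_eq t [tuple y i | i < k].
  by rewrite perm_sym -codomE_tuple.
have r_uniq : uniq (map p (enum 'I_k)).
  by rewrite map_inj_uniq ?enum_uniq //; apply: perm_inj.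
have tupleE (C : zmodType) (z : 'I_k -> C) :
    [tuple tnth [tuple z i | i < k] (p i) | i < k] = map z (map p (enum 'I_k)) :> seq C.
  by rewrite -map_comp; apply: eq_map => i; rewrite tnth_mktuple.
exists (map x (map p (enum 'I_k))); split.
  by rewrite codomE_tuple perm_sym -tupleE; apply/tuple_permP; exists p.
by rewrite is_sequencing_equiv // is_rot_sequencing_equiv // -tupleE -t_E.
Qed.

Lemma uniq_codom_equiv : uniq (codom x) = uniq (codom y).
Proof.
rewrite !codomE; apply: eq_uniq_map => i j _ _.
by have := xy [set i] [set j]; rewrite !big_set1.
Qed.

Lemma mem0_codom_equiv : (0 \in codom x) = (0 \in codom y).
Proof.
rewrite !codomE -!has_pred1 !has_map; apply: eq_has => i /=.
by have := sum_eq0_equiv [set i]; rewrite !big_set1.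
Qed.

Lemma nonzero_sum_codom_equiv : nonzero_sum (codom x) = nonzero_sum (codom y).
Proof.
rewrite /nonzero_sum !codomE !big_map; have := sum_eq0_equiv setT.
by rewrite !(eq_bigl _ _ (@in_setT _)) => ->.
Qed.

End Transfer.
End SubsetSums.

Definition ind_diff k (I J : {set 'I_k}) (i : 'I_k) : int := (i \in I)%:Z - (i \in J)%:Z.

Lemma sumr_ind_diff (M : zmodType) k (F : 'I_k -> M) (I J : {set 'I_k}) :
  \sum_(i in I) F i - \sum_(i in J) F i = \sum_i F i *~ ind_diff I J i.
Proof.
rewrite /ind_diff; under [RHS]eq_bigr do rewrite mulrzBr.
by rewrite sumrB; congr (_ - _); rewrite big_mkcond; apply: eq_bigr => i _; case: (i \in _).
Qed.

Lemma rat_common_denominator (I : finType) (q : I -> rat) :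
  exists2 d : nat, (0 < d)%N & exists c : I -> int, forall i, (c i)%:~R = d%:R * q i.
Proof.
pose D i := `|denq (q i)|%N.
have D_gt0 i : (0 < D i)%N by rewrite absz_gt0 denq_neq0.
exists (\prod_i D i)%N; first exact: prodn_gt0.
exists (fun i => numq (q i) * (\prod_(j | j != i) D j)%N%:Z) => i.
rewrite [in RHS](bigD1 i) //= intrM numqE natrM /D natr_absz ger0_norm ?denq_ge0 //.
by rewrite [RHS]mulrC mulrA.
Qed.

Lemma exists_pos_notin (R : realDomainType) (s : seq R) : exists2 t : R, 0 < t & t \notin s.
Proof.
pose m := \big[Order.max/0]_(y <- s) y.
have m_ge0 : 0 <= m by apply: bigmax_ge_id.
exists (1 + m); first by rewrite ltr_pwDl.
apply/negP => /(le_bigmax_seq 0 _ xpredT id) /(_ isT).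
by rewrite leNgt ltr_pwDl.
Qed.

Lemma exists_col_nonorthogonal (R : realFieldType) k (ws : seq 'rV[R]_k) :
  all (fun w => w != 0) ws -> exists z : 'cV[R]_k, all (fun w => (w *m z) 0 0 != 0) ws.
Proof.
elim: ws => [|w ws IHws] /=; first by exists 0.
case/andP=> w_neq0 /IHws [z wsz].
have [wz_eq0|wz_neq0] := eqVneq ((w *m z) 0 0) 0; last by exists z; rewrite wz_neq0.
have /existsP [j wj_neq0] : [exists j, w 0 j != 0].
  apply: contraR w_neq0 => /existsPn wj_eq0; apply/eqP/rowP => j.
  by rewrite mxE; apply/eqP/negPn/wj_eq0.
have mulmx_shift (v : 'rV[R]_k) t :
    (v *m (z + t *: delta_mx j 0)) 0 0 = (v *m z) 0 0 + t * v 0 j.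
  by rewrite mulmxDr -scalemxAr -colE !mxE.
have [t t_gt0 t_fresh] := exists_pos_notin [seq - ((v *m z) 0 0 / v 0 j) | v <- ws].
exists (z + t *: delta_mx j 0).
rewrite /= mulmx_shift wz_eq0 add0r mulf_neq0 ?(gt_eqF t_gt0) //=.
apply/allP => v v_ws; rewrite mulmx_shift.
have [->|vj_neq0] := eqVneq (v 0 j) 0; first by rewrite mulr0 addr0 (allP wsz).
apply: contra t_fresh => vzt; apply/mapP; exists v => //.
by apply: (mulIf vj_neq0); rewrite mulNr divfK //; apply/eqP; rewrite -addr_eq0 addrC.
Qed.

Lemma exists_col_separating (R : realFieldType) m n (A : 'M[R]_(m, n)) (ws : seq 'rV[R]_n) :
  exists a : 'cV[R]_n, forall w, w \in ws -> ((w *m a) 0 0 == 0) = (w <= A)%MS.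
Proof.
pose B := cokermx A.
have [|z wsz] := @exists_col_nonorthogonal _ _ [seq w *m B | w <- ws & w *m B != 0].
  by rewrite all_map; apply/allP => w; rewrite mem_filter => /andP[].
exists (B *m z) => w w_ws; rewrite submxE mulmxA.
have [->|wB_neq0] := eqVneq (w *m B) 0; first by rewrite mul0mx mxE eqxx.
by apply/negbTE/(allP wsz)/mapP; exists w; rewrite // mem_filter wB_neq0.
Qed.

Lemma torsion_free_relation_span (G : zmodType) k n (g : 'I_k -> G)
    (A : 'M[int]_(n, k)) (e : 'rV[int]_k) : torsion_free G ->
  (forall r, \sum_i g i *~ A r i = 0) ->
  (map_mx (intr : int -> rat) e <= map_mx intr A)%MS -> \sum_i g i *~ e 0 i = 0.
Proof.
move=> tfG A_rel /submxP [D eDA].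
have [d d_gt0 [c cE]] := rat_common_denominator (fun r => D 0 r).
have e_comb i : e 0 i * d%:Z = \sum_r c r * A r i.
  apply: (@intr_inj rat); rewrite intrM rmorph_sum /=.
  have := congr1 (fun M : 'M[rat]_(1, k) => M 0 i) eDA; rewrite !mxE => ->.
  rewrite mulr_suml; apply: eq_bigr => r _; rewrite !mxE intrM cE.
  by rewrite mulrC mulrA.
have : (\sum_i g i *~ e 0 i) *~ d%:Z = 0.
  rewrite mulrz_suml; under eq_bigr do rewrite -mulrzA e_comb mulrz_sumr.
  rewrite exchange_big big1 //= => r _.
  by under eq_bigr do rewrite mulrC mulrzA; rewrite -mulrz_suml A_rel mul0rz.
by case: d d_gt0 {e_comb cE} => // d _ /tfG.
Qed.

Section IntegerModel.

Variables (G : zmodType) (k : nat) (g : 'I_k -> G).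
Hypothesis tfG : torsion_free G.

Local Notation set_pair := ({set 'I_k} * {set 'I_k})%type.

Definition sums_coincide (IJ : set_pair) := \sum_(i in IJ.1) g i == \sum_(i in IJ.2) g i.

Definition coincidences := filter sums_coincide (enum {: set_pair}).

Definition ind_diff_row (IJ : set_pair) : 'rV[int]_k := \row_i ind_diff IJ.1 IJ.2 i.

Definition coincidence_mx : 'M[int]_(size coincidences, k) :=
  \matrix_(r < size coincidences) ind_diff_row (nth (set0, set0) coincidences r).

Lemma sums_coincide_span IJ :
  sums_coincide IJ =
  (map_mx intr (ind_diff_row IJ) <= map_mx (intr : int -> rat) coincidence_mx)%MS.
Proof.
apply/idP/idP => [IJ_coin | IJ_span].
  have IJ_in : IJ \in coincidences by rewrite mem_filter IJ_coin mem_enum.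
  have r_lt : (index IJ coincidences < size coincidences)%N by rewrite index_mem.
  have -> : ind_diff_row IJ = row (Ordinal r_lt) coincidence_mx by rewrite rowK nth_index.
  by rewrite map_row row_sub.
have coincidence_rel r : \sum_i g i *~ coincidence_mx r i = 0.
  under eq_bigr do rewrite !mxE; rewrite -sumr_ind_diff; apply/eqP; rewrite subr_eq0.
  by have := mem_nth (set0, set0) (ltn_ord r); rewrite mem_filter => /andP[].
apply/eqP/subr0_eq; rewrite sumr_ind_diff.
apply: etrans (torsion_free_relation_span tfG coincidence_rel IJ_span).
by apply: eq_bigr => i _; rewrite mxE.
Qed.

Lemma exists_int_subset_sums_equiv : exists b : 'I_k -> int, subset_sums_equiv g b.
Proof.
have [a aE] := exists_col_separating (map_mx (intr : int -> rat) coincidence_mx)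
  [seq map_mx intr (ind_diff_row IJ) | IJ <- enum {: set_pair}].
have [d d_gt0 [b bE]] := rat_common_denominator (fun i => a i 0).
exists b => I J; rewrite [LHS](sums_coincide_span (I, J)) -aE; last first.
  by apply/mapP; exists (I, J); rewrite ?mem_enum.
rewrite -[in RHS]subr_eq0 sumr_ind_diff.
have -> : (map_mx intr (ind_diff_row (I, J)) *m a) 0 0 =
    d%:R^-1 * (\sum_i b i *~ ind_diff I J i)%:~R.
  rewrite mxE rmorph_sum mulr_sumr; apply: eq_bigr => i _.
  by rewrite !mxE mulrzz rmorphM /= bE mulrA mulKf ?pnatr_eq0 -?lt0n // mulrC.
by rewrite mulf_eq0 invr_eq0 pnatr_eq0 gtn_eqF // intr_eq0.
Qed.

End IntegerModel.

Lemma intr_Zp_eq0 p (z : int) :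
  (1 < p)%N -> (`|z| < p)%N -> ((z%:~R : 'Z_p) == 0) = (z == 0).
Proof.
move=> p_gt1; have natr_Zp_eq0 n : (n < p)%N -> ((n%:R : 'Z_p) == 0) = (n == 0%N).
  move=> n_lt_p; apply/eqP/eqP => [n_eq0|->] //.
  by have := val_Zp_nat p_gt1 n; rewrite n_eq0 modn_small.
by case: z => n /= n_lt_p; rewrite ?NegzE ?rmorphN /= ?oppr_eq0 natr_Zp_eq0.
Qed.

Lemma subset_sums_equiv_Zp k (b : 'I_k -> int) p : (1 < p)%N ->
  2 * \sum_i `|b i| < p%:Z -> subset_sums_equiv b (fun i => (b i)%:~R : 'Z_p).
Proof.
move=> p_gt1 b_small I J; rewrite -subr_eq0 -[RHS]subr_eq0 -!rmorph_sum -rmorphB /=.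
rewrite intr_Zp_eq0 // -ltz_nat abszE (le_lt_trans _ b_small) //.
have sum_le (S : {set 'I_k}) : `|\sum_(i in S) b i| <= \sum_i `|b i|.
  apply: le_trans (ler_norm_sum _ _ _) _.
  by rewrite [leRHS](bigID [in S]) lerDl sumr_ge0.
by rewrite mulr_natl mulr2n (le_trans (ler_normB _ _)) ?lerD.
Qed.

Theorem corollary4p5 (H : finZmodType) (k : nat) (hk : (0 < k)%N) :
  (forall N : nat, exists p : nat, (N < p)%N /\ prime p /\
     forall s : seq ('Z_p * H)%type,
       uniq s -> size s = k -> 0 \notin s -> nonzero_sum s -> sequenceable s) ->
  forall G : zmodType, torsion_free G ->
  forall s : seq (G * H)%type,
    uniq s -> size s = k -> 0 \notin s -> nonzero_sum s -> sequenceable s.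
Proof.
move=> large_p G tfG s s_uniq s_size s_0 s_sum.
pose x := tnth (Tuple (introT eqP s_size)).
have sE : s = codom x by rewrite codomE map_tnth_enum.
have [b gb] := exists_int_subset_sums_equiv (fun i => (x i).1) tfG.
have [p [p_large [p_prime Zp_seq]]] := large_p (absz (2 * \sum_i `|b i|)).
have b_small : 2 * \sum_i `|b i| < p%:Z.
  by rewrite -ltz_nat abszE ger0_norm ?mulr_ge0 ?sumr_ge0 in p_large.
pose y i : ('Z_p * H)%type := ((b i)%:~R, (x i).2).
have xy : subset_sums_equiv x y.
  apply: subset_sums_equiv_pair => // I J.
  by rewrite gb (subset_sums_equiv_Zp (prime_gt1 p_prime) b_small).
rewrite sE; apply: (sequenceable_equiv xy); apply: Zp_seq.
- by rewrite -(uniq_codom_equiv xy) -sE.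
- by rewrite size_codom card_ord.
- by rewrite -(mem0_codom_equiv xy) -sE.
- by rewrite -(nonzero_sum_codom_equiv xy) -sE.
Qed.
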